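(* Let $G$ be a strongly connected network on $\mathcal{V}$ with stationary distribution $\pi$. For all $i,j,m\in\mathcal{V}$: (1) $\boldsymbol{F}_{iij}=\pi_iC_{ij}$; (2) $\dfrac{\boldsymbol{F}_{imj}}{\pi_m}+\dfrac{\boldsymbol{F}_{mij}}{\pi_i}=C_{ij}+C_{jm}-C_{im}$; (3) $\dfrac{\boldsymbol{F}_{imj}}{\pi_m}+\dfrac{\boldsymbol{F}_{ijm}}{\pi_j}=C_{jm}$; (4) $\boldsymbol{F}_{imj}+\boldsymbol{F}_{jmi}=\pi_mC_{ij}$.
   Context: The random walk on $G$ has transition matrix $P=D^{-1}A$ for a nonnegative affinity matrix $A$; strongly connected means all nodes mutually reachable. For target $t$ and $\mathcal{T}=\mathcal{V}\setminus\{t\}$, $F^{\{t\}}=(I-P_{\mathcal{T}\mathcal{T}})^{-1}$, and the fundamental tensor is $\boldsymbol{F}_{smt}=F^{\{t\}}_{sm}$ if $s,m\neq t$ and $0$ otherwise (so $\boldsymbol{F}_{imj}=F^{\{j\}}_{im}$). $H_i^{\{j\}}$ is the expected number of steps for the walk started at $i$ to first hit $j$ ($0$ if $i=j$), and the commute time is $C_{ij}=H_i^{\{j\}}+H_j^{\{i\}}$. *)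

From mathcomp Require Import all_boot all_order all_algebra.
From mathcomp Require Import all_classical all_reals all_analysis.
Set Implicit Arguments. Unset Strict Implicit. Unset Printing Implicit Defensive.
Import Order.TTheory GRing.Theory Num.Theory.
Local Open Scope ring_scope.

Section RW.
Variables (R : realType) (n : nat).
Implicit Types (A : 'M[R]_n.+1).

Definition degmx A : 'M[R]_n.+1 := diag_mx (\row_i \sum_j A i j).

Definition transmx A : 'M[R]_n.+1 := invmx (degmx A) *m A.

Definition strongly_connected A : Prop :=
  forall i j : 'I_n.+1, connect (fun x y => 0 < A x y) i j.

Definition stationary A (pi : 'I_n.+1 -> R) : Prop :=
  (forall i, 0 <= pi i) /\ \sum_i pi i = 1 /\
  (forall j, \sum_i pi i * transmx A i j = pi j).

(* P restricted to T = V \ {t}; T is indexed by 'I_n via lift t *)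
Definition PTT A (t : 'I_n.+1) : 'M[R]_n :=
  \matrix_(a, b) transmx A (lift t a) (lift t b).

Definition Fmx A (t : 'I_n.+1) : 'M[R]_n := invmx (1%:M - PTT A t).

Definition Ften A (s m t : 'I_n.+1) : R :=
  match unlift t s, unlift t m with
  | Some s', Some m' => Fmx A t s' m'
  | _, _ => 0
  end.

(* Pr_i(first hitting time of t = k.+1), for the walk started at i <> t:
   sum over paths staying in T for k steps, then jumping to t *)
Definition first_hit_prob A (i t : 'I_n.+1) (k : nat) : R :=
  match unlift t i with
  | Some i' => \sum_(b < n) (PTT A t ^+ k) i' b * transmx A (lift t b) t
  | None => 0
  end.

Definition hitting_time A (i t : 'I_n.+1) : R :=
  if i == t then 0 else
  fine (\sum_(0 <= k <oo) ((k.+1)%:R * first_hit_prob A i t k)%:E)%E.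

Definition commute_time A (i j : 'I_n.+1) : R :=
  hitting_time A i j + hitting_time A j i.

End RW.

(* Kill the walk at the target t.  Strong connectivity forces every row sum of
   Q^n to be < 1, where Q = P_TT, so I - Q is invertible and the survival
   probabilities decay geometrically; summing by parts, the hitting times of t
   are the solution v of (I - Q) v = 1, i.e. H_x = 1 + sum_y P_xy H_y off t.
   Hence g(x) = pi_m (H_x^j - H_x^m + H_j^m) vanishes at j and satisfies
   (I - P) g = 1_m off j, Kac's formula pi_m (1 + sum_y P_my H_y^m) = 1 giving
   the value at m.  So g is the m-th column of F^{j}, that is
   F_imj = pi_m (H_i^j + H_j^m - H_i^m), and the four identities are algebra. *)

From mathcomp Require Import all_boot all_order all_algebra.
From mathcomp Require Import all_classical all_reals all_analysis.
From mathcomp Require Import zify ring lra.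
Import Order.TTheory GRing.Theory Num.Theory numFieldNormedType.Exports.
Set Implicit Arguments. Unset Strict Implicit.
Local Open Scope ring_scope.

Section ContractingSequence.
Variables (R : realType) (u : nat -> R) (L : nat) (c : R).
Hypotheses (L_gt0 : (0 < L)%N) (c_ge0 : 0 <= c) (c_lt1 : c < 1).
Hypotheses (u_ge0 : forall m, 0 <= u m) (u_nonincr : forall m, u m.+1 <= u m).
Hypothesis u_contr : forall m, u (m + L)%N <= c * u m.
Local Open Scope classical_set_scope.

Lemma contraction_iter k m : u (m + k * L)%N <= c ^+ k * u m.
Proof.
elim: k m => [|k IH] m; first by rewrite mul0n addn0 expr0 mul1r.
rewrite mulSnr addnA exprS -mulrA (le_trans (u_contr _)) // ler_wpM2l //.
Qed.

(* A quarter is what beats the linear factor N below: (j + 1) 4^-j <= 2^-j. *)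
Lemma quarter_contraction :
  exists2 K, (0 < K)%N & forall m, u (m + K)%N <= 4^-1 * u m.
Proof.
have [p cp_le] : exists p, c ^+ p.+1 <= 4^-1.
  have := @cvg_expr R c; rewrite ger0_norm // => /(_ c_lt1) /cvgrPdist_le /(_ 4^-1).
  case=> [|p _ cp_near]; first by rewrite invr_gt0 ltr0n.
  exists p; have := cp_near p.+1 (leqnSn p).
  by rewrite /= sub0r normrN ger0_norm ?exprn_ge0.
exists (p.+1 * L)%N => [|m]; first by rewrite muln_gt0 L_gt0.
by rewrite (le_trans (contraction_iter _ _)) // ler_wpM2r.
Qed.

Lemma natr_mul_block_bound K : (0 < K)%N ->
    (forall m, u (m + K)%N <= 4^-1 * u m) ->
  forall N, N%:R * u N <= K%:R * u 0%N * 2^-1 ^+ (N %/ K).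
Proof.
move=> K_gt0 uK N; set j := (N %/ K)%N.
have u_jK : u (j * K)%N <= 4^-1 ^+ j * u 0%N.
  elim: (j) => [|i IH]; first by rewrite mul0n expr0 mul1r.
  by rewrite mulSnr exprS -mulrA (le_trans (uK _)) // ler_wpM2l.
have uN : u N <= u (j * K)%N := (nonincreasing_seqP u).1 u_nonincr _ _ (leq_divM N K).
have N_lt : (N < j.+1 * K)%N by rewrite -ltn_divLR.
have j_le : j.+1%:R * 2^-1 ^+ j <= 1 :> R.
  rewrite exprVn ler_pdivrMr ?exprn_gt0 // mul1r -natrX ler_nat.
  exact: ltn_expl.
have quarterE : 4^-1 = 2^-1 * 2^-1 :> R.
  by rewrite -invfM; congr GRing.inv; rewrite -natrM.
rewrite quarterE in u_jK.
apply: (@le_trans _ _ ((j.+1 * K)%:R * ((2^-1 * 2^-1) ^+ j * u 0%N))).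
  by apply: ler_pM => //; [rewrite ler_nat ltnW | exact: le_trans uN u_jK].
have -> : (j.+1 * K)%:R * ((2^-1 * 2^-1) ^+ j * u 0%N) =
    (j.+1%:R * 2^-1 ^+ j) * (K%:R * u 0%N * 2^-1 ^+ j) :> R.
  by rewrite natrM exprMn; ring.
by rewrite ler_piMl // !mulr_ge0 ?exprn_ge0.
Qed.

Lemma natr_mul_contracting_cvg0 : (fun N => N%:R * u N) @ \oo --> 0.
Proof.
have [K K_gt0 uK] := quarter_contraction.
have half_lt1 : `|2^-1 : R| < 1 by rewrite ger0_norm // invf_lt1 // ltr1n.
apply/cvgrPdist_le => e e_gt0.
have /cvgrPdist_le/(_ e e_gt0) [j0 _ geom_near] :=
  cvg_geometric (K%:R * u 0%N) half_lt1.
exists (j0 * K)%N => // N /= N_ge; rewrite sub0r normrN ger0_norm ?mulr_ge0 //.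
apply: le_trans (natr_mul_block_bound K_gt0 uK N) _.
have := geom_near (N %/ K)%N; rewrite /= sub0r normrN => /(_ _) geom_le.
by apply: le_trans (ler_norm _) (geom_le _); rewrite leq_divRL.
Qed.

Lemma contracting_cvg0 : u @ \oo --> 0.
Proof.
apply: (squeeze_cvgr _ (cvg_cst 0) natr_mul_contracting_cvg0).
by exists 1%N => // N /= N_ge1; rewrite u_ge0 /= ler_peMl // ler1n.
Qed.

End ContractingSequence.

Lemma sum_mul_succ_diff (R : comPzRingType) (u : nat -> R) N :
  \sum_(0 <= k < N) k.+1%:R * (u k - u k.+1) = \sum_(0 <= k < N) u k - N%:R * u N.
Proof.
elim: N => [|N IH]; first by rewrite !big_geq // mul0r subr0.
by rewrite !big_nat_recr //= IH -[N.+1]addn1 natrD; ring.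
Qed.

Lemma forward_closed_connect {T : finType} {e : rel T} (S : pred T) x y :
  (forall u v, e u v -> S u -> S v) -> connect e x y -> S x -> S y.
Proof.
move=> S_closed /connectP [p]; elim: p x => [|z p IH] x /=; first by move=> _ ->.
case/andP => e_xz p_path y_last Sx.
exact: IH p_path y_last (S_closed _ _ e_xz Sx).
Qed.

Section RandomWalk.
Variables (R : realType) (n : nat) (A : 'M[R]_n.+1).
Hypotheses (A_ge0 : forall x y, 0 <= A x y) (A_sc : strongly_connected A).

Local Notation P := (transmx A).

Definition deg (x : 'I_n.+1) : R := \sum_y A x y.

Lemma hitting_timexx x : hitting_time A x x = 0.
Proof. by rewrite /hitting_time eqxx. Qed.

Lemma strongly_connected_deg_gt0 (x y : 'I_n.+1) : x != y -> forall z, 0 < deg z.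
Proof.
move=> xy z.
have [w zw] : exists w, z != w by case: (eqVneq z x) => [->|]; [exists y | exists x].
case/connectP: (A_sc z w) => [[|u p] /=]; first by move=> _ E; rewrite E eqxx in zw.
case/andP => zu _ _; rewrite /deg (bigD1 u) //= (lt_le_trans zu) // lerDl.
exact: sumr_ge0.
Qed.

Hypothesis deg_gt0 : forall x, 0 < deg x.

Lemma transmxE x y : P x y = A x y / deg x.
Proof.
rewrite /transmx.
have DE : degmx A *m diag_mx (\row_x (deg x)^-1) = 1%:M.
  rewrite /degmx mulmx_diag -diag_const_mx; congr diag_mx; apply/rowP => k.
  by rewrite !mxE mulfV ?(gt_eqF (deg_gt0 k)).
have [D_unit _] := mulmx1_unit DE.
have -> : invmx (degmx A) = diag_mx (\row_x (deg x)^-1).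
  by rewrite -[RHS](mulKmx D_unit) DE mulmx1.
by rewrite mul_diag_mx !mxE mulrC.
Qed.

Lemma transmx_ge0 x y : 0 <= P x y.
Proof. by rewrite transmxE divr_ge0 // ltW. Qed.

Lemma transmx_gt0 x y : (0 < P x y) = (0 < A x y).
Proof. by rewrite transmxE pmulr_lgt0 // invr_gt0. Qed.

Lemma transmx_row_sum x : \sum_y P x y = 1.
Proof.
under eq_bigr do rewrite transmxE.
by rewrite -mulr_suml mulfV ?(gt_eqF (deg_gt0 x)).
Qed.

Lemma stationary_gt0 pi : stationary A pi -> forall x, 0 < pi x.
Proof.
move=> [pi_ge0 [pi_sum1 pi_inv]] x.
have [k pi_k] : exists k, 0 < pi k.
  case: (pickP (fun k => 0 < pi k)) => [k pi_k | pi_le0]; first by exists k.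
  move: pi_sum1; rewrite big1 => [/eqP|k _]; first by rewrite eq_sym oner_eq0.
  by apply/eqP; rewrite eq_le pi_ge0 andbT leNgt pi_le0.
move: (A_sc k x) pi_k.
apply: (forward_closed_connect (S := fun v => 0 < pi v)) => u v A_uv pi_u.
rewrite -pi_inv (bigD1 u) //= (@lt_le_trans _ _ (pi u * P u v)) //.
  by rewrite mulr_gt0 ?transmx_gt0.
by rewrite lerDl sumr_ge0 // => w _; rewrite mulr_ge0 ?transmx_ge0.
Qed.

Section Target.
Variable t : 'I_n.+1.
Local Notation Q := (PTT A t).

Lemma PTTE a b : Q a b = P (lift t a) (lift t b).
Proof. exact: mxE. Qed.

Lemma PTT_ge0 a b : 0 <= Q a b.
Proof. by rewrite PTTE transmx_ge0. Qed.

Lemma PTT_row_sum a : \sum_b Q a b = 1 - P (lift t a) t.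
Proof.
rewrite -(transmx_row_sum (lift t a)) (bigD1_ord t) //= addrC addrK.
by apply: eq_bigr => b _; rewrite PTTE.
Qed.

Lemma PTT_exp_ge0 k a b : 0 <= (Q ^+ k) a b.
Proof.
elim: k a b => [|k IH] a b; first by rewrite expr0 mxE ler0n.
by rewrite exprS -mulmxE mxE sumr_ge0 // => c _; rewrite mulr_ge0 ?PTT_ge0.
Qed.

Definition survival k a : R := \sum_b (Q ^+ k) a b.

Lemma survivalD m k a : survival (m + k) a = \sum_b (Q ^+ m) a b * survival k b.
Proof.
rewrite /survival exprD -mulmxE; under eq_bigr do rewrite mxE.
by rewrite exchange_big; apply: eq_bigr => b _; rewrite mulr_sumr.
Qed.

Lemma survival0 a : survival 0 a = 1.
Proof.
rewrite /survival expr0 (bigD1 a) //= mxE eqxx big1 ?addr0 // => b /negbTE b_neq_a.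
by rewrite mxE eq_sym b_neq_a.
Qed.

Lemma survival1 a : survival 1 a = 1 - P (lift t a) t.
Proof. by rewrite /survival expr1 PTT_row_sum. Qed.

Lemma survival_ge0 k a : 0 <= survival k a.
Proof. by apply: sumr_ge0 => b _; apply: PTT_exp_ge0. Qed.

Lemma survival_le1 k a : survival k a <= 1.
Proof.
elim: k a => [|k IH] a; first by rewrite survival0.
rewrite -add1n survivalD expr1 (@le_trans _ _ (\sum_b Q a b)) //.
  by apply: ler_sum => b _; rewrite ler_piMr ?PTT_ge0.
by rewrite PTT_row_sum lerBlDr lerDl transmx_ge0.
Qed.

Lemma survivalS_le k a : survival k.+1 a <= survival k a.
Proof.
rewrite -addn1 survivalD; apply: ler_sum => b _.
by rewrite ler_piMr ?PTT_exp_ge0 ?survival_le1.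
Qed.

Lemma survivalS_eq1 k a : survival k.+1 a = 1 ->
  P (lift t a) t = 0 /\ forall b, 0 < Q a b -> survival k b = 1.
Proof.
move=> surv1.
have defect_ge0 b : 0 <= Q a b * (1 - survival k b).
  by rewrite mulr_ge0 ?PTT_ge0 // subr_ge0 survival_le1.
have defectE : \sum_b Q a b * (1 - survival k b) = - P (lift t a) t.
  under eq_bigr do rewrite mulrBr mulr1.
  by rewrite sumrB PTT_row_sum -(expr1 Q) -survivalD add1n surv1 addrC addKr.
have P_t0 : P (lift t a) t = 0.
  apply/eqP; rewrite eq_le transmx_ge0 andbT -oppr_ge0 -defectE.
  exact: sumr_ge0.
split=> // b Q_ab; move: defectE; rewrite P_t0 oppr0 => defect0.
move: (@psumr_eq0P _ _ predT _ (fun b _ => defect_ge0 b) defect0 b isT) => /eqP.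
by rewrite mulf_eq0 gt_eqF //= subr_eq0 => /eqP <-.
Qed.

Definition trapped k : {set 'I_n} := [set a | survival k a == 1].

Lemma trappedS k : trapped k.+1 \subset trapped k.
Proof.
apply/fintype.subsetP => a; rewrite !inE => /eqP surv1.
by rewrite eq_le survival_le1 -{1}surv1 survivalS_le.
Qed.

Lemma trapped_fixpoint k : trapped k.+1 = trapped k -> trapped k = finset.set0.
Proof.
move=> trapped_eq; apply/finset.setP => a; rewrite !inE; apply/negP => a_trapped.
pose S x := if unlift t x is Some b then b \in trapped k else false.
suff : S t by rewrite /S unlift_none.
apply: (forward_closed_connect (S := S) _ (A_sc (lift t a) t)).
  2: by rewrite /S liftK inE.
move=> x y; rewrite /S; case: unliftP => [b ->|->] // A_pos.
rewrite -{1}trapped_eq inE => /eqP /survivalS_eq1 [P_t0 Q_surv1].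
move: A_pos; rewrite -transmx_gt0.
case: unliftP => [c ->|->]; last by rewrite P_t0 ltxx.
by rewrite -PTTE inE => /Q_surv1 ->.
Qed.

Lemma card_trapped k : (#|trapped k| <= n - k)%N.
Proof.
elim: k => [|k IH]; first by rewrite subn0 (leq_trans (max_card _)) ?card_ord.
have [trapped_eq|trapped_neq] := eqVneq (trapped k.+1) (trapped k).
  by rewrite trapped_eq trapped_fixpoint ?cards0.
have /proper_card : trapped k.+1 \proper trapped k.
  by rewrite finset.properEneq trapped_neq trappedS.
lia.
Qed.

Lemma survival_lt1 a : survival n a < 1.
Proof.
have : #|trapped n| == 0%N by rewrite -leqn0 -(subnn n) card_trapped.
rewrite cards_eq0 => /eqP /finset.setP /(_ a); rewrite !inE => surv_neq1.
by rewrite lt_neqAle surv_neq1 survival_le1.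
Qed.

Lemma survival_contraction :
  exists2 c, 0 <= c < 1 & forall m a, survival (m + n) a <= c * survival m a.
Proof.
exists (\big[Order.max/0]_a survival n a).
  by rewrite bigmax_ge_id /=; apply/bigmax_ltP; split=> // a _; apply: survival_lt1.
move=> m a; rewrite survivalD [survival m a]/survival mulr_sumr.
apply: ler_sum => b _; rewrite mulrC ler_wpM2r ?PTT_exp_ge0 //.
exact: le_bigmax.
Qed.

Lemma unitmx_I_PTT : (1%:M - Q) \in unitmx.
Proof.
have [c /andP [c_ge0 c_lt1] contr] := survival_contraction.
have surv_le a : survival n a <= c by have := contr 0%N a; rewrite survival0 mulr1.
rewrite unitmxE unitfE; apply/negP => /det0P [u u_neq0 uM].
have uQ : u = u *m Q by apply/eqP; rewrite -subr_eq0 -{1}[u]mulmx1 -mulmxBr uM.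
have uQn k : u = u *m Q ^+ k.
  elim: k => [|k IH]; first by rewrite expr0 mulmx1.
  by rewrite exprSr -mulmxE mulmxA -IH.
pose N := \sum_b `|u 0 b|.
have N_le : N <= c * N.
  rewrite {1}/N (uQn n); apply: (@le_trans _ _ (\sum_b \sum_a `|u 0 a| * (Q ^+ n) a b)).
    apply: ler_sum => b _; rewrite mxE (le_trans (ler_norm_sum _ _ _)) //.
    by apply: ler_sum => a _; rewrite normrM (ger0_norm (PTT_exp_ge0 _ _ _)).
  rewrite exchange_big /= /N mulr_sumr; apply: ler_sum => a _.
  by rewrite -mulr_sumr -/(survival n a) mulrC ler_wpM2r.
have N0 : N = 0.
  apply/eqP; rewrite eq_le sumr_ge0 // andbT.
  have : (1 - c) * N <= 0 by rewrite mulrBl mul1r subr_le0.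
  by rewrite pmulr_rle0 // subr_gt0.
move/negP: u_neq0; apply; apply/eqP/rowP => b; rewrite mxE; apply/normr0_eq0.
exact: (@psumr_eq0P _ _ predT (fun b => `|u 0 b|) (fun _ _ => normr_ge0 _) N0 b isT).
Qed.

Lemma first_hit_probE k a :
  first_hit_prob A (lift t a) t k = survival k a - survival k.+1 a.
Proof.
have P_t b : P (lift t b) t = 1 - survival 1 b by rewrite survival1 subKr.
rewrite /first_hit_prob liftK; under eq_bigr do rewrite P_t mulrBr mulr1.
by rewrite sumrB -[k.+1]addn1 survivalD.
Qed.

Section Poisson.
Variable v : 'cV[R]_n.
Hypothesis v_poisson : (1%:M - Q) *m v = const_mx 1.
Local Open Scope classical_set_scope.

Lemma poisson_rec a : v a 0 = 1 + \sum_b Q a b * v b 0.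
Proof.
have := congr1 (fun w : 'cV[R]_n => w a 0) v_poisson.
by rewrite mulmxBl mul1mx /= !mxE => <-; rewrite subrK.
Qed.

Lemma survival_poisson k a :
  survival k a = (Q ^+ k *m v) a 0 - (Q ^+ k.+1 *m v) a 0.
Proof.
have : Q ^+ k *m const_mx 1 = Q ^+ k *m v - Q ^+ k.+1 *m v.
  by rewrite -v_poisson mulmxA mulmxBr mulmx1 mulmxE -exprSr -mulmxBl.
move/(congr1 (fun w : 'cV[R]_n => w a 0)); rewrite !mxE => <-.
by apply: eq_bigr => b _; rewrite mxE mulr1.
Qed.

Lemma survival_sum N a :
  \sum_(0 <= k < N) survival k a = v a 0 - (Q ^+ N *m v) a 0.
Proof.
rewrite (@telescope_sumr_eq _ 0 N (fun k => - (Q ^+ k *m v) a 0) (survival^~ a)) //.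
  by rewrite expr0 mul1mx opprK addrC.
by move=> k _; rewrite survival_poisson opprK addrC.
Qed.

Lemma norm_exp_poisson_le N a :
  `|(Q ^+ N *m v) a 0| <= survival N a * \sum_b `|v b 0|.
Proof.
rewrite mxE mulr_suml (le_trans (ler_norm_sum _ _ _)) //; apply: ler_sum => b _.
rewrite normrM ger0_norm ?PTT_exp_ge0 // ler_wpM2l ?PTT_exp_ge0 //.
by rewrite (bigD1 b) //= lerDl sumr_ge0.
Qed.

Lemma expected_first_hit_cvg a :
  (fun N => \sum_(0 <= k < N) k.+1%:R * first_hit_prob A (lift t a) t k)
    @ \oo --> v a 0.
Proof.
have [c /andP [c_ge0 c_lt1] contr] := survival_contraction.
have n_gt0 : (0 < n)%N by apply: leq_ltn_trans (ltn_ord a).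
have surv_cvg := contracting_cvg0 n_gt0 c_ge0 c_lt1
  (survival_ge0^~ a) (survivalS_le^~ a) (contr^~ a).
have Nsurv_cvg := natr_mul_contracting_cvg0 n_gt0 c_ge0 c_lt1
  (survival_ge0^~ a) (survivalS_le^~ a) (contr^~ a).
have exp_cvg : (fun N => (Q ^+ N *m v) a 0) @ \oo --> 0.
  apply: norm_cvg0.
  apply: (squeeze_cvgr _ (cvg_cst 0) (h := fun N => survival N a * \sum_b `|v b 0|)).
    by exists 0%N => // N _; rewrite normr_ge0 norm_exp_poisson_le.
  by have := cvgMr_tmp (b := \sum_b `|v b 0|) surv_cvg; rewrite mul0r; apply.
have -> : (fun N => \sum_(0 <= k < N) k.+1%:R * first_hit_prob A (lift t a) t k) =
    (fun N => v a 0 - (Q ^+ N *m v) a 0 - N%:R * survival N a).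
  apply/funext => N; under eq_bigr do rewrite first_hit_probE.
  by rewrite sum_mul_succ_diff survival_sum.
by have := cvgB (cvgB (cvg_cst (v a 0)) exp_cvg) Nsurv_cvg; rewrite !subr0; apply.
Qed.

Lemma hitting_time_poisson a : hitting_time A (lift t a) t = v a 0.
Proof.
rewrite /hitting_time eq_sym (negbTE (neq_lift _ _)).
set g := fun k => k.+1%:R * first_hit_prob A (lift t a) t k.
have -> : (fun N => (\sum_(0 <= k < N) (g k)%:E)%E) =
    EFin \o (fun N => \sum_(0 <= k < N) g k).
  by apply/funext => N /=; rewrite sumEFin.
have g_cvg : (fun N => \sum_(0 <= k < N) g k) @ \oo --> v a 0 :=
  @expected_first_hit_cvg a.
by rewrite EFin_lim ?(cvg_lim _ g_cvg) //; apply/cvg_ex; exists (v a 0).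
Qed.

End Poisson.

Lemma hitting_time_rec x : x != t ->
  hitting_time A x t = 1 + \sum_y P x y * hitting_time A y t.
Proof.
pose v : 'cV[R]_n := invmx (1%:M - Q) *m const_mx 1.
have v_poisson : (1%:M - Q) *m v = const_mx 1 by rewrite mulKVmx ?unitmx_I_PTT.
rewrite eq_sym => /unlift_some [a -> _].
rewrite (hitting_time_poisson v_poisson) (poisson_rec v_poisson) (bigD1_ord t) //=.
rewrite hitting_timexx mulr0 add0r; congr (1 + _); apply: eq_bigr => b _.
by rewrite PTTE (hitting_time_poisson v_poisson).
Qed.

Lemma Fmx_col_solution (g : 'I_n.+1 -> R) b : g t = 0 ->
    (forall x, x != t -> g x - \sum_y P x y * g y = (x == lift t b)%:R) ->
  forall a, Fmx A t a b = g (lift t a).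
Proof.
move=> g_t g_eq a.
pose gv : 'cV[R]_n := \col_c g (lift t c).
have gv_eq : (1%:M - Q) *m gv = \col_c (c == b)%:R.
  apply/colP => c; rewrite mulmxBl mul1mx !mxE -(inj_eq (@lift_inj _ t)).
  rewrite -g_eq ?(eq_sym _ t) ?neq_lift //; congr (_ - _).
  rewrite (bigD1_ord t) //= g_t mulr0 add0r.
  by apply: eq_bigr => d _; rewrite !mxE.
have : gv = Fmx A t *m \col_c (c == b)%:R by rewrite -gv_eq /Fmx mulKmx ?unitmx_I_PTT.
move/(congr1 (fun w : 'cV[R]_n => w a 0)); rewrite !mxE => ->.
rewrite (bigD1 b) //= !mxE eqxx mulr1 big1 ?addr0 // => d /negbTE d_neq_b.
by rewrite !mxE d_neq_b mulr0.
Qed.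

End Target.

Section Stationary.
Variable pi : 'I_n.+1 -> R.
Hypothesis pi_st : stationary A pi.

Lemma kac_return_time t : pi t * (1 + \sum_y P t y * hitting_time A y t) = 1.
Proof.
have [_ [pi_sum1 pi_inv]] := pi_st.
have balance :
    \sum_x pi x * (hitting_time A x t - \sum_y P x y * hitting_time A y t) = 0.
  under eq_bigr do rewrite mulrBr.
  rewrite sumrB; apply/eqP; rewrite subr_eq0; apply/eqP.
  under [RHS]eq_bigr do rewrite mulr_sumr.
  rewrite exchange_big /=; apply: eq_bigr => y _.
  by rewrite -pi_inv mulr_suml; apply: eq_bigr => x _; rewrite mulrA.
move: balance; rewrite (bigD1 t) //= hitting_timexx sub0r.
rewrite [X in _ + X](eq_bigr pi) => [|x x_neq_t]; last first.
  by rewrite (hitting_time_rec x_neq_t) addrK mulr1.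
have -> : \sum_(x | x != t) pi x = 1 - pi t.
  by rewrite -pi_sum1 [in RHS](bigD1 t) //= addrAC subrr add0r.
rewrite mulrN mulrDr mulr1; lra.
Qed.

Lemma Ften_hitting_time i m j :
  Ften A i m j = pi m * (hitting_time A i j + hitting_time A j m - hitting_time A i m).
Proof.
rewrite /Ften.
case: unliftP => [i' Ei|->] /=; last by rewrite hitting_timexx add0r subrr mulr0.
case: unliftP => [m' Em|->] /=; last by rewrite hitting_timexx addr0 subrr mulr0.
pose g x := pi m * (hitting_time A x j - hitting_time A x m + hitting_time A j m).
have g_j : g j = 0 by rewrite /g hitting_timexx sub0r addNr mulr0.
have g_eq x : x != j -> g x - \sum_y P x y * g y = (x == lift j m')%:R.
  move=> x_neq_j; rewrite -Em.
  have -> : \sum_y P x y * g y = pi m * (\sum_y P x y * hitting_time A y j)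
      - pi m * (\sum_y P x y * hitting_time A y m) + pi m * hitting_time A j m.
    rewrite -[X in _ = _ + X]mulr1 -(transmx_row_sum x) !mulr_sumr -sumrB -big_split /=.
    by apply: eq_bigr => y _; rewrite /g; ring.
  rewrite /g (hitting_time_rec x_neq_j); have [->|x_neq_m] := eqVneq x m.
    rewrite hitting_timexx /=.
    transitivity (pi m * (1 + \sum_y P m y * hitting_time A y m)); first by ring.
    exact: kac_return_time.
  by rewrite (hitting_time_rec x_neq_m) /=; ring.
by rewrite (Fmx_col_solution g_j g_eq) /g -Ei; ring.
Qed.

End Stationary.
End RandomWalk.

Theorem mainTheorem10 (R : realType) (n : nat) (A : 'M[R]_n.+1)
    (pi : 'I_n.+1 -> R) :
  (forall i j, 0 <= A i j) ->
  strongly_connected A ->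
  stationary A pi ->
  forall i j m : 'I_n.+1,
    [/\ Ften A i i j = pi i * commute_time A i j,
        Ften A i m j / pi m + Ften A m i j / pi i =
          commute_time A i j + commute_time A j m - commute_time A i m,
        Ften A i m j / pi m + Ften A i j m / pi j = commute_time A j m
      & Ften A i m j + Ften A j m i = pi m * commute_time A i j].
Proof.
case: n A pi => [|n] A pi A_ge0 A_sc pi_st i j m.
  rewrite (ord1 i) (ord1 j) (ord1 m) /commute_time hitting_timexx /Ften unlift_none /=.
  by rewrite !(mul0r, mulr0, addr0, subrr); split.
have deg_gt0 := strongly_connected_deg_gt0 A_ge0 A_sc (neq_lift ord0 ord0).
have pi_neq0 x : pi x != 0 by rewrite gt_eqF ?(stationary_gt0 A_ge0 A_sc deg_gt0 pi_st).
rewrite /commute_time !(Ften_hitting_time A_ge0 A_sc deg_gt0 pi_st) !hitting_timexx.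
by split; [ring | field; rewrite !pi_neq0 | field; rewrite !pi_neq0 | ring].
Qed.
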